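(* Consider a cellular network with $n$ base stations $\mathcal{N}=\{1,\dots,n\}$, base station $i$ serving a nonempty set $\mathcal{J}_i$ of users (pairwise disjoint), channel gains $g_{kj}>0$, noise power $\sigma^2>0$, and $$f_i(\mathbf{x};\mathbf{r},\mathbf{p})=\sum_{j\in\mathcal{J}_i}\frac{r_{ij}}{\log\Big(1+\frac{p_i g_{ij}}{\sum_{k\ne i} p_k g_{kj} x_k+\sigma^2}\Big)}.$$ Let a load vector $\mathbf{x}>\mathbf{0}$ and a rate vector $\mathbf{r}>\mathbf{0}$ be given. Then the power vectors $\mathbf{p}>\mathbf{0}$ satisfying $\mathbf{x}=\mathbf{f}(\mathbf{x};\mathbf{r},\mathbf{p})$ are exactly those satisfying the non-linear power coupling equation (NPCE) $\mathbf{p}=\mathbf{h}(\mathbf{p};\mathbf{x},\mathbf{r})$, where $\mathbf{h}(\cdot;\mathbf{x},\mathbf{r})$ is a standard interference function. Moreover, if a solution $\mathbf{p}$ exists, then it is unique and is obtained as the limit of the iterative algorithm for power (IAP): both the synchronous iteration $\mathbf{p}^{\ell}=\mathbf{h}(\mathbf{p}^{\ell-1};\mathbf{x},\mathbf{r})$, $\ell=1,2,\dots$, and the asynchronous iteration (in which, in each outer iteration, the components $i=1,\dots,n$ are updated one at a time by $p_i\leftarrow h_i(\bar{\mathbf{p}}_i;\mathbf{x},\mathbf{r})$ using the most recently updated values of the other components) converge to $\mathbf{p}$ from any initial power vector $\mathbf{p}^0>\mathbf{0}$.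
   Context: Vector inequalities are componentwise; $\log$ is natural logarithm. For a vector $\mathbf{p}$, $\bar{\mathbf{p}}_i\in\mathbb{R}^{n-1}$ denotes $\mathbf{p}$ with its $i$th component removed. For $\bar{\mathbf{p}}_i\ge\mathbf{0}$, $h_i(\bar{\mathbf{p}}_i;\mathbf{x},\mathbf{r})$ is defined as the unique $p_i>0$ satisfying $$1=\eta_i(p_i):=\sum_{j\in\mathcal{J}_i}\frac{r_{ij}/x_i}{\log\big(1+p_i\, g_{ij}/(\sum_{k\ne i}p_kg_{kj}x_k+\sigma^2)\big)}$$ (equivalently $x_i=f_i(\mathbf{x};\mathbf{r},\mathbf{p})$), and $\mathbf{h}(\mathbf{p};\mathbf{x},\mathbf{r})=(h_1(\bar{\mathbf{p}}_1;\mathbf{x},\mathbf{r}),\dots,h_n(\bar{\mathbf{p}}_n;\mathbf{x},\mathbf{r}))^T$. A function $\mathbf{I}:\mathbb{R}^n_+\to\mathbb{R}^n_+$ is a standard interference function if for all $\mathbf{p}\ge\mathbf{0}$: (positivity) $\mathbf{I}(\mathbf{p})>\mathbf{0}$; (monotonicity) $\mathbf{p}\ge\mathbf{p}'$ implies $\mathbf{I}(\mathbf{p})\ge\mathbf{I}(\mathbf{p}')$; (scalability) for all $\alpha>1$, $\alpha\mathbf{I}(\mathbf{p})>\mathbf{I}(\alpha\mathbf{p})$. *)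

From HB Require Import structures.
From mathcomp Require Import all_boot all_order all_algebra.
From mathcomp Require Import all_classical all_reals all_analysis.
Set Implicit Arguments. Unset Strict Implicit. Unset Printing Implicit Defensive.
Import Order.TTheory GRing.Theory Num.Theory.
Local Open Scope ring_scope.
Local Open Scope classical_set_scope.

Section Network.
Variables (R : realType) (n m : nat).
(* J i : users served by base station i; g k j : gain from BS k to user j *)
Variables (J : 'I_n -> {set 'I_m}) (g : 'I_n -> 'I_m -> R) (sigma2 : R).

Definition interf (i : 'I_n) (j : 'I_m) (x p : 'I_n -> R) : R :=
  \sum_(k < n | k != i) p k * g k j * x k + sigma2.

Definition f (r : 'I_n -> 'I_m -> R) (p x : 'I_n -> R) (i : 'I_n) : R :=
  \sum_(j in J i) r i j / ln (1 + p i * g i j / interf i j x p).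

(* eta_i(t) with the other components of p fixed (p_i itself is not used) *)
Definition eta (x : 'I_n -> R) (r : 'I_n -> 'I_m -> R) (p : 'I_n -> R)
  (i : 'I_n) (t : R) : R :=
  \sum_(j in J i) (r i j / x i) / ln (1 + t * g i j / interf i j x p).

Definition h (x : 'I_n -> R) (r : 'I_n -> 'I_m -> R) (p : 'I_n -> R)
  (i : 'I_n) : R :=
  xget 0 [set t : R | 0 < t /\ eta x r p i t = 1].

Definition upd (x : 'I_n -> R) (r : 'I_n -> 'I_m -> R) (q : 'I_n -> R)
  (i : 'I_n) : 'I_n -> R :=
  fun k => if k == i then h x r q i else q k.

Definition async_step (x : 'I_n -> R) (r : 'I_n -> 'I_m -> R)
  (p : 'I_n -> R) : 'I_n -> R :=
  foldl (upd x r) p (enum 'I_n).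

End Network.

Definition standard_interference (R : realType) (n : nat)
  (I : ('I_n -> R) -> ('I_n -> R)) : Prop :=
  (forall p, (forall i, 0 <= p i) -> forall i, 0 < I p i) /\
  (forall p p', (forall i, 0 <= p i) -> (forall i, 0 <= p' i) ->
     (forall i, p' i <= p i) -> forall i, I p' i <= I p i) /\
  (forall p, (forall i, 0 <= p i) -> forall alpha : R, 1 < alpha ->
     forall i, I (fun k => alpha * p k) i < alpha * I p i).

From Pilot Require Import Defs.
From HB Require Import structures.
From mathcomp Require Import all_boot all_order all_algebra.
From mathcomp Require Import all_classical all_reals all_analysis.
From mathcomp Require Import lra.
Import Order.TTheory GRing.Theory Num.Theory.
Import numFieldNormedType.Exports.
Set Implicit Arguments. Unset Strict Implicit.
Local Open Scope classical_set_scope.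
Local Open Scope ring_scope.

(* For fixed powers of the other stations, [eta_i] is a continuous and strictly
   decreasing function of [p_i], larger than 1 near 0 and smaller than 1 for
   large [p_i]; so [h_i] is well defined and [x_i = f_i] amounts to [p_i = h_i].
   The interference enters [eta_i] only through the ratios [p_i g_ij / I_j], so
   multiplying every [I_j] of cell [i] by at most [c] multiplies [h_i] by at most
   [c]: this gives monotonicity and scalability of [h].
   Given a solution [p*] with total weighted interference [M], the interference
   part of each [I_j] is at most [kappa = M / (M + sigma^2) < 1] times [I_j].
   Hence [(1 - b) p* <= p <= (1 + a) p*] implies
   [(1 - kappa b) p* <= h(p) <= (1 + kappa a) p*], also when the components are
   updated one at a time; both iterations converge geometrically to [p*], which
   is therefore the only solution. *)

Lemma ler_div_scale (R : numFieldType) (u A B c : R) :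
  0 < u -> 0 < A -> 0 < B -> (u / B <= c * (u / A)) = (A <= c * B).
Proof.
move=> u0 A0 B0.
by rewrite mulrCA ler_pdivrMr // -mulrA ler_pMr // mulrAC ler_pdivlMr // mul1r.
Qed.

Lemma ltr_div_scale (R : numFieldType) (u A B c : R) :
  0 < u -> 0 < A -> 0 < B -> (u / B < c * (u / A)) = (A < c * B).
Proof.
move=> u0 A0 B0.
by rewrite mulrCA ltr_pdivrMr // -mulrA ltr_pMr // mulrAC ltr_pdivlMr // mul1r.
Qed.

Section Load.
Variables (R : realType) (T : finType).

Definition load (A : {set T}) (a b : T -> R) (t : R) : R :=
  \sum_(j in A) a j / ln (1 + t * b j).

Lemma ln1D_gt0 (u : R) : 0 < u -> 0 < ln (1 + u).
Proof. by move=> u0; apply: ln_gt0; rewrite ltrDl. Qed.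

Lemma ler_div_ln1D (c u v : R) : 0 <= c -> 0 < u -> u <= v ->
  c / ln (1 + v) <= c / ln (1 + u).
Proof.
move=> c0 u0 uv; have v0 := lt_le_trans u0 uv.
rewrite ler_wpM2l // lef_pV2 ?posrE ?ln1D_gt0 // ler_ln ?posrE ?lerD2l //;
  exact: addr_gt0.
Qed.

Lemma ltr_div_ln1D (c u v : R) : 0 < c -> 0 < u -> u < v ->
  c / ln (1 + v) < c / ln (1 + u).
Proof.
move=> c0 u0 uv; have v0 := lt_trans u0 uv.
rewrite ltr_pM2l // ltf_pV2 ?posrE ?ln1D_gt0 // ltr_ln ?posrE ?ltrD2l //;
  exact: addr_gt0.
Qed.

Variables (A : {set T}) (a : T -> R).
Hypothesis A_neq0 : A != finset.set0.
Hypothesis a_gt0 : forall j, j \in A -> 0 < a j.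

Lemma load_le (b b' : T -> R) (s t : R) :
  (forall j, j \in A -> 0 < s * b j <= t * b' j) ->
  load A a b' t <= load A a b s.
Proof.
move=> sbt; apply: ler_sum => j jA; have /andP[sb0 le] := sbt j jA.
exact: ler_div_ln1D (ltW (a_gt0 jA)) sb0 le.
Qed.

Lemma load_lt (b b' : T -> R) (s t : R) :
  (forall j, j \in A -> 0 < s * b j < t * b' j) ->
  load A a b' t < load A a b s.
Proof.
move=> sbt; apply: ltr_sum => [|j jA].
  have /set0Pn [j jA] := A_neq0.
  by apply/hasP; exists j; rewrite ?mem_index_enum.
have /andP[sb0 lt] := sbt j jA; exact: ltr_div_ln1D (a_gt0 jA) sb0 lt.
Qed.

Variable b : T -> R.
Hypothesis b_gt0 : forall j, j \in A -> 0 < b j.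

Lemma load_decreasing (s t : R) : 0 < s -> s < t -> load A a b t < load A a b s.
Proof.
move=> s0 st; apply: load_lt => j jA.
by rewrite mulr_gt0 ?b_gt0 // ltr_pM2r ?b_gt0.
Qed.

Lemma load_continuous (t : R) : 0 < t -> {for t, continuous (load A a b)}.
Proof.
move=> t0; apply: cvg_big => [|j jA]; first exact: add_continuous.
change {for t, continuous (fun s : R => a j / ln (1 + s * b j))}.
apply: continuousM; first exact: cvg_cst.
apply: continuousV; first by rewrite gt_eqF // ln1D_gt0 // mulr_gt0 ?b_gt0.
apply: continuous_comp; last first.
  by apply: continuous_ln; rewrite ltr_wpDr // ltW // mulr_gt0 ?b_gt0.
apply: continuousD; first exact: cvg_cst.
by apply: continuousM; [exact: cvg_id | exact: cvg_cst].
Qed.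

Lemma load_ge1 : exists2 t, 0 < t & 1 <= load A a b t.
Proof.
have /set0Pn [j0 j0A] := A_neq0.
have a0 := a_gt0 j0A; have b0 := b_gt0 j0A.
(* at [t = a j0 / b j0] the [j0]-th summand is [a j0 / ln (1 + a j0) >= 1] *)
exists (a j0 / b j0); first exact: divr_gt0.
rewrite /load (bigD1 j0) //= divfK ?gt_eqF //.
apply: ler_wpDr.
  apply: sumr_ge0 => j /andP[jA _]; apply: divr_ge0; first exact/ltW/a_gt0.
  by apply/ltW/ln1D_gt0; rewrite mulr_gt0 ?divr_gt0 ?b_gt0.
by rewrite ler_pdivlMr ?ln1D_gt0 // mul1r le_ln1Dx // (lt_trans _ a0) ?ltrN10.
Qed.

Lemma load_le1 : exists2 t, 0 < t & load A a b t <= 1.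
Proof.
have /set0Pn [j0 j0A] := A_neq0.
pose N : R := #|A|%:R.
have N0 : 0 < N by rewrite ltr0n card_gt0.
(* once [t * b j >= expR (N * a j) - 1], the [j]-th summand is at most [1 / N] *)
pose u j := (expR (N * a j) - 1) / b j.
have u0 j : j \in A -> 0 < u j.
  by move=> jA; rewrite divr_gt0 ?b_gt0 // subr_gt0 expR_gt1 mulr_gt0 ?a_gt0.
pose t := \big[Num.max/0]_(j in A) u j.
have ut j : j \in A -> u j <= t by move=> jA; exact: le_bigmax_cond.
exists t; first exact: lt_le_trans (u0 _ j0A) (ut _ j0A).
apply: le_trans (_ : \sum_(j in A) N^-1 <= 1); last first.
  by rewrite sumr_const -mulr_natr mulVf ?gt_eqF.
apply: ler_sum => j jA.
have e : u j * b j = expR (N * a j) - 1 by rewrite divfK ?gt_eqF ?b_gt0.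
apply: le_trans (ler_div_ln1D (u := u j * b j) (ltW (a_gt0 jA)) _ _) _.
- by rewrite e subr_gt0 expR_gt1 mulr_gt0 ?a_gt0.
- by rewrite ler_pM2r ?b_gt0 ?ut.
by rewrite e addrC subrK expRK invfM mulrA mulrAC mulfV ?mul1r ?gt_eqF ?a_gt0.
Qed.

Lemma load_root : exists t, 0 < t /\ load A a b t = 1.
Proof.
have [s s0 ge1] := load_ge1; have [t t0 le1] := load_le1.
have st : s <= t.
  rewrite leNgt; apply/negP => ts.
  have := le_lt_trans ge1 (lt_le_trans (load_decreasing t0 ts) le1).
  by rewrite ltxx.
have [c] : exists2 c, c \in `[s, t] & load A a b c = 1.
  apply: IVT => //; last by rewrite ge_min le_max le1 ge1 orbT.
  apply: continuous_in_subspaceT => c; rewrite inE /= in_itv /= => /andP[sc _].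
  exact/load_continuous/(lt_le_trans s0 sc).
rewrite in_itv /= => /andP[sc _] e; exists c; split => //.
exact: lt_le_trans s0 sc.
Qed.

Lemma load_root_unique (s t : R) : 0 < s -> 0 < t ->
  load A a b s = 1 -> load A a b t = 1 -> s = t.
Proof.
move=> s0 t0 es et; apply/eqP; rewrite eq_le !leNgt.
by apply/andP; split; apply/negP => lt;
  [have := load_decreasing t0 lt | have := load_decreasing s0 lt];
  rewrite es et ltxx.
Qed.

Lemma load_root_le (b' : T -> R) (c s t : R) :
  (forall j, j \in A -> 0 < b' j <= c * b j) -> 0 < c -> 0 < t ->
  load A a b s = 1 -> load A a b' t = 1 -> s <= c * t.
Proof.
move=> b'b c0 t0 es et; rewrite leNgt; apply/negP => lt.
have : load A a b s < load A a b' t.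
  apply: lt_le_trans (load_decreasing (mulr_gt0 c0 t0) lt) (load_le _) => j jA.
  have /andP[b'0 le] := b'b j jA.
  by rewrite mulr_gt0 //= [c * t]mulrC -mulrA ler_pM2l.
by rewrite es et ltxx.
Qed.

Lemma load_root_lt (b' : T -> R) (c s t : R) :
  (forall j, j \in A -> 0 < b' j < c * b j) -> 0 < c -> 0 < t ->
  load A a b s = 1 -> load A a b' t = 1 -> s < c * t.
Proof.
move=> b'b c0 t0 es et; rewrite ltNge; apply/negP => le.
have : load A a b s < load A a b' t.
  apply: le_lt_trans (load_le (b := b) (s := c * t) _) (load_lt _) => j jA.
    by rewrite !mulr_gt0 ?b_gt0 //= ler_pM2r ?b_gt0.
  have /andP[b'0 lt] := b'b j jA.
  by rewrite mulr_gt0 //= [c * t]mulrC -mulrA ltr_pM2l.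
by rewrite es et ltxx.
Qed.

End Load.

Section Network.
Variables (R : realType) (n m : nat).
Variables (J : 'I_n -> {set 'I_m}) (g : 'I_n -> 'I_m -> R) (sigma2 : R)
  (x : 'I_n -> R) (r : 'I_n -> 'I_m -> R).
Hypothesis J_neq0 : forall i, J i != finset.set0.
Hypothesis g_gt0 : forall k j, 0 < g k j.
Hypothesis sigma2_gt0 : 0 < sigma2.
Hypothesis x_gt0 : forall i, 0 < x i.
Hypothesis r_gt0 : forall i j, j \in J i -> 0 < r i j.

Local Notation S q i j := (\sum_(k < n | k != i) q k * g k j * x k).
Local Notation I q i j := (interf g sigma2 i j x q).
Local Notation eta := (Defs.eta J g sigma2 x r).
Local Notation h := (Defs.h J g sigma2 x r).

Definition nonneg (q : 'I_n -> R) := forall k, 0 <= q k.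

Lemma ler_interf_sum (q q' : 'I_n -> R) (c d : R) i j :
  (forall k, c * q k <= d * q' k) -> c * S q i j <= d * S q' i j.
Proof.
move=> le; rewrite !mulr_sumr; apply: ler_sum => k _.
rewrite !mulrA; apply: ler_wpM2r; first exact: ltW.
by apply: ler_wpM2r; [exact: ltW | exact: le].
Qed.

Lemma interf_gt0 q i j : nonneg q -> 0 < I q i j.
Proof.
move=> q0; apply: ltr_wpDl sigma2_gt0; apply: sumr_ge0 => k _.
by rewrite !mulr_ge0 // ltW.
Qed.

Let rx_gt0 i j : j \in J i -> 0 < r i j / x i.
Proof. by move=> jJ; rewrite divr_gt0 ?r_gt0. Qed.

Let gI_gt0 q i j : nonneg q -> 0 < g i j / I q i j.
Proof. by move=> q0; rewrite divr_gt0 ?interf_gt0. Qed.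

Lemma eta_load q i :
  eta q i = load (J i) (fun j => r i j / x i) (fun j => g i j / I q i j).
Proof. by apply/funext => t; apply: eq_bigr => j _; rewrite mulrA. Qed.

Lemma h_spec q i : nonneg q -> 0 < h q i /\ eta q i (h q i) = 1.
Proof.
move=> q0; apply: (xgetPex 0 (P := [set t | 0 < t /\ eta q i t = 1])).
by rewrite eta_load; apply: load_root => // j jJ; [apply: rx_gt0 | apply: gI_gt0].
Qed.

Lemma h_le_scale q q' i c : nonneg q -> nonneg q' -> 0 < c ->
  (forall j, j \in J i -> I q i j <= c * I q' i j) -> h q i <= c * h q' i.
Proof.
move=> q0 q'0 c0 le.
move: (h_spec i q0) (h_spec i q'0); rewrite !eta_load => -[h0 e] [h'0 e'].
apply: (load_root_le (J_neq0 i) _ _ _ c0 h'0 e e') => j jJ; first exact: rx_gt0.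
  exact: gI_gt0.
by rewrite gI_gt0 //= ler_div_scale ?interf_gt0 ?le.
Qed.

Lemma h_lt_scale q q' i c : nonneg q -> nonneg q' -> 0 < c ->
  (forall j, j \in J i -> I q i j < c * I q' i j) -> h q i < c * h q' i.
Proof.
move=> q0 q'0 c0 lt.
move: (h_spec i q0) (h_spec i q'0); rewrite !eta_load => -[h0 e] [h'0 e'].
apply: (load_root_lt (J_neq0 i) _ _ _ c0 h'0 e e') => j jJ; first exact: rx_gt0.
  exact: gI_gt0.
by rewrite gI_gt0 //= ltr_div_scale ?interf_gt0 ?lt.
Qed.

Lemma h_unique q i t : nonneg q -> 0 < t -> eta q i t = 1 -> t = h q i.
Proof.
move=> q0 t0; have [h0] := h_spec i q0; rewrite !eta_load => eh e.
apply: (load_root_unique (J_neq0 i) _ _ t0 h0 e eh) => j jJ.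
  exact: rx_gt0.
exact: gI_gt0.
Qed.

Lemma f_eq_iff_eta (p : 'I_n -> R) i :
  x i = f J g sigma2 r p x i <-> eta p i (p i) = 1.
Proof.
have -> : eta p i (p i) = f J g sigma2 r p x i / x i.
  by rewrite /f mulr_suml; apply: eq_bigr => j _; rewrite mulrAC.
by split => [<- | /divr1_eq ->]; rewrite // mulfV ?gt_eqF.
Qed.

Lemma npce_iff (p : 'I_n -> R) : (forall i, 0 < p i) ->
  (forall i, x i = f J g sigma2 r p x i) <-> (forall i, p i = h p i).
Proof.
move=> p_gt0; have p0 : nonneg p by move=> k; exact: ltW.
split=> fix_p i.
  by apply: h_unique => //; apply/f_eq_iff_eta.
by apply/f_eq_iff_eta; rewrite {1}fix_p; case: (h_spec i p0).
Qed.

Lemma h_standard : standard_interference h.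
Proof.
split; first by move=> p p0 i; case: (h_spec i p0).
split=> [p p' p0 p'0 le i | p p0 al al1 i].
  rewrite -[h p i]mul1r; apply: h_le_scale ltr01 _ => // j _.
  rewrite mul1r /interf lerD2r -[X in X <= _]mul1r -[X in _ <= X]mul1r.
  by apply: ler_interf_sum => k; rewrite !mul1r.
have al0 : 0 < al := lt_trans ltr01 al1.
apply: h_lt_scale => // [k | j _]; first by rewrite mulr_ge0 // ltW.
rewrite /interf mulrDr -[X in X + _ < _]mul1r.
apply: ler_ltD; first by apply: ler_interf_sum => k; rewrite mul1r.
by rewrite ltr_pMl.
Qed.

Section FixedPoint.
Variable ps : 'I_n -> R.
Hypothesis ps_gt0 : forall k, 0 < ps k.
Hypothesis ps_fix : forall i, ps i = h ps i.

Let ps_ge0 : nonneg ps. Proof. by move=> k; exact: ltW. Qed.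

Definition total_interf : R := \sum_(k < n) \sum_(j < m) ps k * g k j * x k.
Definition kappa : R := total_interf / (total_interf + sigma2).

Let term_ge0 k j : 0 <= ps k * g k j * x k.
Proof. by rewrite !mulr_ge0 // ltW. Qed.

Lemma total_interf_ge0 : 0 <= total_interf.
Proof. by apply: sumr_ge0 => k _; apply: sumr_ge0 => j _. Qed.

Lemma kappa_ge0 : 0 <= kappa.
Proof. by rewrite divr_ge0 ?addr_ge0 ?total_interf_ge0 // ltW. Qed.

Lemma kappa_lt1 : kappa < 1.
Proof.
by rewrite ltr_pdivrMr ?mul1r ?ltrDl // ltr_wpDl ?total_interf_ge0.
Qed.

Lemma interf_sum_le_total i j : S ps i j <= total_interf.
Proof.
apply: (@le_trans _ _ (\sum_(k < n | k != i) \sum_(j' < m) ps k * g k j' * x k)).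
  apply: ler_sum => k _; rewrite (bigD1 j) //= lerDl.
  by apply: sumr_ge0 => j' _.
rewrite [leRHS](bigID (fun k => k != i)) /= lerDl.
by apply: sumr_ge0 => k _; apply: sumr_ge0 => j' _.
Qed.

(* [s / (s + sigma2)] is increasing in [s], and [kappa] is its value at the
   total interference. *)
Lemma interf_sum_le_kappa i j : S ps i j <= kappa * I ps i j.
Proof.
have := interf_sum_le_total i j; have S0 : 0 <= S ps i j by apply: sumr_ge0.
have := total_interf_ge0; have := sigma2_gt0.
rewrite /kappa /interf mulrAC => s0 M0 SM.
rewrite ler_pdivlMr; nra.
Qed.

Definition band (a b : R) (k : 'I_n) (v : R) :=
  (1 - b) * ps k <= v <= (1 + a) * ps k.

Definition box (a b : R) (q : 'I_n -> R) := forall k, band a b k (q k).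

Lemma band_weaken a b k v : 0 <= a -> 0 <= b ->
  band (kappa * a) (kappa * b) k v -> band a b k v.
Proof.
move=> a0 b0 /andP[lo up]; have k0 := kappa_ge0; have k1 := kappa_lt1.
have p0 := ps_gt0 k; apply/andP; split.
  by apply: le_trans lo; apply: ler_wpM2r; [exact: ltW | nra].
by apply: le_trans up _; apply: ler_wpM2r; [exact: ltW | nra].
Qed.

Lemma box_nonneg a b q : b <= 1 -> box a b q -> nonneg q.
Proof.
move=> b1 bq k; have /andP[lo _] := bq k; apply: le_trans lo.
by rewrite mulr_ge0 ?subr_ge0 // ltW.
Qed.

Lemma interf_box a b q i j : 0 <= a -> 0 <= b -> box a b q ->
  (1 - kappa * b) * I ps i j <= I q i j <= (1 + kappa * a) * I ps i j.
Proof.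
move=> a0 b0 bq; have := interf_sum_le_kappa i j.
have lo : (1 - b) * S ps i j <= 1 * S q i j.
  by apply: ler_interf_sum => k; have /andP[] := bq k; rewrite mul1r mulrC.
have up : 1 * S q i j <= (1 + a) * S ps i j.
  by apply: ler_interf_sum => k; have /andP[] := bq k; rewrite mul1r mulrC.
have S0 : 0 <= S ps i j by apply: sumr_ge0.
have := kappa_ge0; have := sigma2_gt0; rewrite /interf => s0 k0 Sk.
apply/andP; split; nra.
Qed.

Lemma h_box a b q i : 0 <= a -> 0 <= b -> b <= 1 -> box a b q ->
  band (kappa * a) (kappa * b) i (h q i).
Proof.
move=> a0 b0 b1 bq; have q0 := box_nonneg b1 bq.
have c0 : 0 < 1 - kappa * b by have := kappa_lt1; have := kappa_ge0; nra.
apply/andP; split; last first.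
  rewrite ps_fix; apply: h_le_scale => //; first by have := kappa_ge0; nra.
  by move=> j _; case/andP: (interf_box i j a0 b0 bq).
rewrite -ler_pdivlMl // ps_fix.
apply: h_le_scale; rewrite ?invr_gt0 // => j _.
by rewrite ler_pdivlMl //; case/andP: (interf_box i j a0 b0 bq).
Qed.

Definition contracts (F : ('I_n -> R) -> 'I_n -> R) :=
  forall a b q, 0 <= a -> 0 <= b -> b <= 1 -> box a b q ->
  box (kappa * a) (kappa * b) (F q).

Lemma h_contracts : contracts h.
Proof. by move=> a b q a0 b0 b1 bq i; exact: h_box. Qed.

Local Notation upd := (upd J g sigma2 x r).

Lemma foldl_upd_notin s q k : k \notin s -> foldl upd q s k = q k.
Proof.
elim: s q => [|i s IH] q //=; rewrite in_cons negb_or => /andP[ki ks].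
by rewrite IH // /upd (negbTE ki).
Qed.

Lemma foldl_upd_box a b s q : 0 <= a -> 0 <= b -> b <= 1 -> box a b q ->
  box a b (foldl upd q s) /\
  forall k, k \in s -> band (kappa * a) (kappa * b) k (foldl upd q s k).
Proof.
move=> a0 b0 b1; elim: s q => [|i s IH] q bq //=.
have bq' : box a b (upd q i).
  move=> k; rewrite /upd; case: eqP => [-> | _]; last exact: bq.
  exact: band_weaken (h_box i a0 b0 b1 bq).
have [bs tight] := IH _ bq'; split => // k; rewrite in_cons.
case: (boolP (k \in s)) => [ks _ | ks]; first exact: tight.
rewrite orbF => /eqP ki; rewrite foldl_upd_notin // /upd ki eqxx.
exact: h_box.
Qed.

Lemma async_contracts : contracts (async_step J g sigma2 x r).
Proof.
move=> a b q a0 b0 b1 bq k.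
by have [_ ->] := foldl_upd_box (enum 'I_n) a0 b0 b1 bq; rewrite ?mem_enum.
Qed.

Lemma iter_box F a b q : contracts F -> 0 <= a -> 0 <= b -> b <= 1 ->
  box a b q -> forall l, box (kappa ^+ l * a) (kappa ^+ l * b) (iter l F q).
Proof.
move=> F_contr a0 b0 b1 bq; elim=> [|l IH]; first by rewrite expr0 !mul1r.
have kl0 : 0 <= kappa ^+ l by rewrite exprn_ge0 ?kappa_ge0.
have kl1 : kappa ^+ l <= 1 by rewrite exprn_ile1 ?kappa_ge0 ?ltW ?kappa_lt1.
rewrite iterS exprS -!(mulrA kappa); apply: F_contr; rewrite ?mulr_ge0 //.
by rewrite -[1]mul1r ler_pM.
Qed.

Lemma box_cvg (u : nat -> 'I_n -> R) a b :
  (forall l, box (kappa ^+ l * a) (kappa ^+ l * b) (u l)) ->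
  forall i, u l i @[l --> \oo] --> ps i.
Proof.
move=> bu i.
have k0 : (kappa ^+ l) @[l --> \oo] --> 0.
  by apply: cvg_expr; rewrite ger0_norm ?kappa_ge0 ?kappa_lt1.
have lim c : (1 + kappa ^+ l * c) * ps i @[l --> \oo] --> ps i.
  suff : (1 + kappa ^+ l * c) * ps i @[l --> \oo] --> (1 + 0 * c) * ps i.
    by rewrite mul0r addr0 mul1r.
  apply: cvgM; last exact: cvg_cst.
  by apply: cvgD; [exact: cvg_cst | apply: cvgM => //; exact: cvg_cst].
have lo : (1 - kappa ^+ l * b) * ps i @[l --> \oo] --> ps i.
  by under eq_fun do rewrite -mulrN; exact: lim.
by apply: (squeeze_cvgr _ lo (lim a)); apply: nearW => l; exact: bu.
Qed.

Lemma exists_box (q : 'I_n -> R) : (forall k, 0 < q k) ->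
  exists a b, [/\ 0 <= a, 0 <= b, b <= 1 & box a b q].
Proof.
move=> q_gt0.
pose a := \big[Num.max/0]_k (q k / ps k).
pose c := \big[Num.max/1]_k (ps k / q k).
have c1 : 1 <= c by exact: bigmax_ge_id.
have c0 : 0 < c := lt_le_trans ltr01 c1.
exists a, (1 - c^-1); split.
- exact: bigmax_ge_id.
- by rewrite subr_ge0 invf_le1.
- by rewrite lerBlDr lerDl invr_ge0 ltW.
move=> k; rewrite /band opprB addrC subrK; apply/andP; split.
  by rewrite ler_pdivrMl // -ler_pdivrMr // (le_bigmax _ (fun k => ps k / q k)).
by rewrite -ler_pdivrMr // ler_wpDl // le_bigmax.
Qed.

Lemma contracts_cvg F : contracts F ->
  forall q : 'I_n -> R, (forall k, 0 < q k) ->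
  forall i, iter l F q i @[l --> \oo] --> ps i.
Proof.
move=> F_contr q q_gt0; have [a [b [a0 b0 b1 bq]]] := exists_box q_gt0.
exact: (box_cvg (u := fun l => iter l F q)) (iter_box F_contr a0 b0 b1 bq).
Qed.

End FixedPoint.

Lemma iap_cvg (p p0 : 'I_n -> R) :
  (forall i, 0 < p i) -> (forall i, p i = h p i) -> (forall i, 0 < p0 i) ->
  (forall i, iter l h p0 i @[l --> \oo] --> p i) /\
  (forall i, iter l (async_step J g sigma2 x r) p0 i @[l --> \oo] --> p i).
Proof.
move=> p_gt0 p_fix p0_gt0; split=> i; apply: (contracts_cvg p_gt0 _ p0_gt0).
  exact: h_contracts.
exact: async_contracts.
Qed.

Lemma fixed_point_unique (p p' : 'I_n -> R) :
  (forall i, 0 < p i) -> (forall i, p i = h p i) ->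
  (forall i, 0 < p' i) -> (forall i, p' i = h p' i) -> p' = p.
Proof.
move=> p_gt0 p_fix p'_gt0 p'_fix; apply/funext => i.
have iter_p' l : iter l h p' = p'.
  by elim: l => //= l ->; apply/funext => k; rewrite -p'_fix.
have := contracts_cvg p_gt0 (h_contracts p_gt0 p_fix) p'_gt0 (i := i).
under eq_fun do rewrite iter_p'.
by move=> c; exact: (cvg_unique _ (cvg_cst (p' i)) c).
Qed.

End Network.

Theorem theorem2 (R : realType) (n m : nat)
  (J : 'I_n -> {set 'I_m}) (g : 'I_n -> 'I_m -> R) (sigma2 : R)
  (x : 'I_n -> R) (r : 'I_n -> 'I_m -> R) :
  (forall i, J i != finset.set0) ->
  (forall i i', i != i' -> fintype.disjoint (mem (J i)) (mem (J i'))) ->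
  (forall k j, 0 < g k j) ->
  0 < sigma2 ->
  (forall i, 0 < x i) ->
  (forall i j, j \in J i -> 0 < r i j) ->
  (forall p : 'I_n -> R, (forall i, 0 < p i) ->
     ((forall i, x i = f J g sigma2 r p x i) <->
      (forall i, p i = h J g sigma2 x r p i))) /\
  standard_interference (h J g sigma2 x r) /\
  (forall p : 'I_n -> R, (forall i, 0 < p i) ->
     (forall i, x i = f J g sigma2 r p x i) ->
     (forall p' : 'I_n -> R, (forall i, 0 < p' i) ->
        (forall i, x i = f J g sigma2 r p' x i) -> p' = p) /\
     (forall p0 : 'I_n -> R, (forall i, 0 < p0 i) ->
        (forall i, (fun l : nat => iter l (h J g sigma2 x r) p0 i) @ \oo --> p i) /\
        (forall i, (fun l : nat => iter l (async_step J g sigma2 x r) p0 i)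
                     @ \oo --> p i))).
Proof.
(* the user sets need not be disjoint *)
move=> J_neq0 _ g_gt0 sigma2_gt0 x_gt0 r_gt0.
have npce := npce_iff J_neq0 g_gt0 sigma2_gt0 x_gt0 r_gt0.
split; first exact: npce.
split; first exact: h_standard J_neq0 g_gt0 sigma2_gt0 x_gt0 r_gt0.
move=> p p_gt0 /(npce _ p_gt0) p_fix.
split=> [p' p'_gt0 /(npce _ p'_gt0) p'_fix | p0 p0_gt0].
  exact: (fixed_point_unique J_neq0 g_gt0 sigma2_gt0 x_gt0 r_gt0 p_gt0 p_fix
    p'_gt0 p'_fix).
exact: (iap_cvg J_neq0 g_gt0 sigma2_gt0 x_gt0 r_gt0 p_gt0 p_fix p0_gt0).
Qed.
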